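(* Let $\mathcal A$ be finite, $r,\hat r:\mathcal A\to[0,1]$, $\eta>0$, and $\pi^{\mathrm{ref}}\in\Delta(\mathcal A)$ with $\pi^{\mathrm{ref}}(a)>0$ for all $a$. Suppose $\hat\pi\in\arg\max_{\pi\in\Delta(\mathcal A)}J(\pi;\hat r)$. Then there exists $\bar u\in[0,1]$ such that $$\mathrm{SubOpt}(\hat\pi)=\frac\eta2\left(\mathbb E_{a\sim\pi_{\bar u}}\Big[\frac{\pi_{\bar u}(a)}{\pi^{\mathrm{ref}}(a)}(r(a)-\hat r(a))^2\Big]-\frac{\Big(\sum_a\frac{\pi_{\bar u}(a)^2}{\pi^{\mathrm{ref}}(a)}(r(a)-\hat r(a))\Big)^2}{\sum_a\frac{\pi_{\bar u}(a)^2}{\pi^{\mathrm{ref}}(a)}}\right),$$ where $\pi_{\bar u}$ is the maximizer of $J(\cdot;r_{\bar u})$ over $\Delta(\mathcal A)$ with $r_{\bar u}=(1-\bar u)r+\bar u\hat r$. In particular, $$\mathrm{SubOpt}(\hat\pi)\le\frac\eta2\,\mathbb E_{a\sim\pi_{\bar u}}\Big[\frac{\pi_{\bar u}(a)}{\pi^{\mathrm{ref}}(a)}(r(a)-\hat r(a))^2\Big].$$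
   Context: For $f:\mathcal A\to\mathbb R$, $J(\pi;f)=\sum_af(a)\pi(a)-\eta^{-1}\mathrm{KL}(\pi^{\mathrm{ref}}\|\pi)$, where $\mathrm{KL}(P\|Q)=\sum_aP(a)\log(P(a)/Q(a))$. $\pi^*$ is the (unique) maximizer of $J(\cdot;r)$ over $\Delta(\mathcal A)$, and $\mathrm{SubOpt}(\pi)=J(\pi^*;r)-J(\pi;r)$. *)

From HB Require Import structures.
From mathcomp Require Import all_boot all_order all_algebra.
From mathcomp Require Import all_classical all_reals all_analysis.
Set Implicit Arguments. Unset Strict Implicit. Unset Printing Implicit Defensive.
Import Order.TTheory GRing.Theory Num.Theory.
Local Open Scope ring_scope.
Local Open Scope ereal_scope.

Section Defs.
Context {R : realType} {A : finType}.

Definition simplex (p : A -> R) : Prop :=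
  (forall a, (0 <= p a)%R) /\ (\sum_a p a)%R = 1%R.

(* KL(P || Q) = sum_a P a log(P a / Q a), with 0 log(0/q) = 0, and +oo when
   P a > 0 = Q a for some a. *)
Definition KL (P Q : A -> R) : \bar R :=
  if [forall a, (0 < P a)%R ==> (0 < Q a)%R]
  then (\sum_a P a * ln (P a / Q a))%:E
  else +oo.

Definition J (pref : A -> R) (eta : R) (f : A -> R) (pi : A -> R) : \bar R :=
  (\sum_a f a * pi a)%:E - (eta^-1)%:E * KL pref pi.

Definition is_maximizer (pref : A -> R) (eta : R) (f : A -> R) (pi : A -> R) : Prop :=
  simplex pi /\ forall p, simplex p -> J pref eta f p <= J pref eta f pi.

End Defs.

From HB Require Import structures.
From mathcomp Require Import all_boot all_order all_algebra.
From mathcomp Require Import all_classical all_reals all_analysis.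
From mathcomp Require Import ring lra.
Set Implicit Arguments. Unset Strict Implicit.
Import Order.TTheory GRing.Theory Num.Theory.
Import numFieldNormedType.Exports.
Local Open Scope ring_scope.
Local Open Scope classical_set_scope.

(* The maximizer of J(.; f) over the simplex is the policy
   pi_f a = pref a / (eta * (lambda_f - f a)), where lambda_f > max f is fixed
   by normalization: this is the first-order condition, and global optimality
   (and uniqueness) follows from ln x <= x - 1.  Along the path
   r_u = (1 - u) r + u rhat the normalizer lambda_u is Lipschitz, and the
   identity lambda_z - lambda_u = (z - u) * (weighted mean of rhat - r) makes it
   differentiable.  Hence phi u = J(pi_u; r) is differentiable with
   phi' u = - u * eta * V u, where V u is the bracket in the statement.
   Rolle's theorem applied to phi 0 - phi u - (phi 0 - phi 1) u^2, which
   vanishes at u = 0 and u = 1, gives ubar with phi 0 - phi 1 = eta/2 * V ubar. *)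

Lemma ln_le_subr1 (R : realType) (x : R) : 0 < x -> ln x <= x - 1.
Proof. by move=> x_gt0; have := expR_ge1Dx (ln x); rewrite lnK ?posrE //; lra. Qed.

Lemma ln_lt_subr1 (R : realType) (x : R) : 0 < x -> x != 1 -> ln x < x - 1.
Proof.
move=> x_gt0 x_neq1; have /expR_gt1Dx : ln x != 0 by rewrite ln_eq0.
by rewrite lnK ?posrE //; lra.
Qed.

(* [is_derive] on [R] expresses derivatives with the action [*:] of [R] on itself. *)
Lemma real_scaleE (R : realType) (c d : R) : c *: d = c * d.
Proof. by []. Qed.

Lemma is_derive_fsum (R : realType) (I : finType) (h : I -> R -> R) (x : R)
    (dh : I -> R) :
  (forall i, is_derive x 1 (h i) (dh i)) ->
  is_derive x 1 (fun y => \sum_i h i y) (\sum_i dh i).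
Proof.
move=> h_dh; rewrite -fct_sumE.
by elim/big_ind2 : _ => // *; [exact: is_derive_cst | exact: is_deriveD].
Qed.

Lemma continuous_fsum (R : realType) (I : finType) (h : I -> R -> R) (x : R) :
  (forall i, {for x, continuous (h i)}) ->
  {for x, continuous (fun y => \sum_i h i y)}.
Proof.
move=> h_cont; apply: (@cvg_big _ _ +%R 0 predT _ _ (nbhs x) _ h) => //.
- exact: add_continuous.
- by move=> i _; exact: h_cont.
Qed.

Section GibbsPolicy.
Variables (R : realType) (A : finType) (pref : A -> R) (eta : R).
Hypotheses (eta_gt0 : 0 < eta) (pref_gt0 : forall a, 0 < pref a)
  (pref_sum1 : \sum_a pref a = 1).

Lemma exists_action : exists a : A, true.
Proof.
case: (pickP (fun _ : A => true)) => [a _ | A0]; first by exists a.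
suff : \sum_a pref a = 0 by rewrite pref_sum1 => /eqP; rewrite oner_eq0.
by apply: big_pred0 => a; exact: A0.
Qed.

Lemma sumr_gt0 (F : A -> R) : (forall a, 0 < F a) -> 0 < \sum_a F a.
Proof.
move=> F_gt0; have [a _] := exists_action.
rewrite (bigD1 a) //= ltr_pwDl // sumr_ge0 // => b _; exact: ltW.
Qed.

Lemma exists_normalizer (f : A -> R) :
  exists l, (forall a, f a < l) /\ \sum_a pref a / (l - f a) = eta.
Proof.
have [a0 _] := exists_action.
have [am _ f_max] := @arg_maxP _ R A a0 predT f isT.
have f_le a : f a <= f am := f_max a isT.
pose F l := \sum_a pref a / (l - f a).
set lo := f am + pref am / eta; set hi := f am + eta^-1.
have lt_lo a : f a < lo by rewrite (le_lt_trans (f_le a)) // ltrDl divr_gt0.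
have pref_le1 : pref am <= 1.
  by rewrite -pref_sum1 (bigD1 am) //= lerDl sumr_ge0 // => a _; exact: ltW.
have lo_le_hi : lo <= hi.
  by rewrite lerD2l -[leRHS]mul1r ler_wpM2r // invr_ge0 ltW.
have F_cont : {within `[lo, hi], continuous F}.
  apply: continuous_in_subspaceT => l; rewrite inE /= in_itv /= => /andP[lo_le _].
  apply: continuous_fsum => a; apply: cvgM; first exact: cvg_cst.
  apply: cvgV; first by rewrite subr_eq0 gt_eqF // (lt_le_trans (lt_lo a)).
  by apply: cvgB; [exact: cvg_id | exact: cvg_cst].
(* At [lo] the [am]-term alone equals [eta];
   at [hi] each term is at most [eta * pref a]. *)
have F_lo : eta <= F lo.
  rewrite /F (bigD1 am) //= {2}/lo addrAC subrr add0r.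
  rewrite invf_div mulrCA mulfV ?gt_eqF // mulr1 lerDl.
  by apply: sumr_ge0 => a _; rewrite divr_ge0 ?ltW // subr_gt0.
have F_hi : F hi <= eta.
  rewrite /F -[leRHS]mulr1 -pref_sum1 mulr_sumr; apply: ler_sum => a _.
  have hi_sub_ge : eta^-1 <= hi - f a by rewrite /hi; have := f_le a; lra.
  have hi_sub_gt0 : 0 < hi - f a by rewrite (lt_le_trans _ hi_sub_ge) ?invr_gt0.
  have one_le : 1 <= eta * (hi - f a).
    by rewrite -(mulfV (lt0r_neq0 eta_gt0)) ler_wpM2l // ltW.
  by rewrite ler_pdivrMr //; have := pref_gt0 a; nra.
have [|l l_in Fl] := @IVT _ F _ _ eta lo_le_hi F_cont.
  by rewrite ge_min F_hi orbT le_max F_lo.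
exists l; split=> // a; move: l_in; rewrite in_itv /= => /andP[lo_le _].
exact: lt_le_trans (lt_lo a) lo_le.
Qed.

Definition normalizer (f : A -> R) : R := projT1 (cid (exists_normalizer f)).

Definition slack (f : A -> R) (a : A) : R := normalizer f - f a.

Lemma slack_gt0 f a : 0 < slack f a.
Proof. by rewrite subr_gt0; case: (projT2 (cid (exists_normalizer f))). Qed.

Lemma sum_pref_div_slack f : \sum_a pref a / slack f a = eta.
Proof. by case: (projT2 (cid (exists_normalizer f))). Qed.

(* Solves the first-order condition f a + pref a / (eta * p a) = normalizer f. *)
Definition gibbs (f : A -> R) (a : A) : R := pref a / (eta * slack f a).

Lemma gibbs_gt0 f a : 0 < gibbs f a.
Proof. by rewrite divr_gt0 ?mulr_gt0 ?slack_gt0. Qed.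

Lemma gibbs_sum1 f : \sum_a gibbs f a = 1.
Proof.
under eq_bigr do rewrite /gibbs invfM mulrCA.
by rewrite -mulr_sumr sum_pref_div_slack mulVf ?gt_eqF.
Qed.

Lemma pref_div_gibbs f a : pref a / gibbs f a = eta * slack f a.
Proof. by rewrite /gibbs invf_div mulrCA mulfV ?mulr1 ?gt_eqF. Qed.

Definition objective (f p : A -> R) : R :=
  \sum_a f a * p a - eta^-1 * \sum_a pref a * ln (pref a / p a).

Lemma J_objective f p : (forall a, 0 < p a) -> J pref eta f p = (objective f p)%:E.
Proof.
move=> p_gt0; rewrite /J /KL ifT; last by apply/forallP => a; apply/implyP.
by rewrite /objective EFinB EFinM.
Qed.

Lemma J_Ny f p : ~ (forall a, 0 < p a) -> J pref eta f p = -oo%E.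
Proof.
move=> p_not_gt0; rewrite /J /KL ifF ?gt0_muley ?lte_fin ?invr_gt0 //.
by apply/negP => /forallP p_gt0; apply: p_not_gt0 => a; move/implyP: (p_gt0 a); apply.
Qed.

Lemma objective_gibbs_sub f p : (forall a, 0 < p a) -> \sum_a p a = 1 ->
  objective f (gibbs f) - objective f p =
  eta^-1 * \sum_a pref a * (p a / gibbs f a - 1 - ln (p a / gibbs f a)).
Proof.
move=> p_gt0 p_sum1.
have linear_part : \sum_a f a * gibbs f a - \sum_a f a * p a =
    eta^-1 * \sum_a pref a * (p a / gibbs f a - 1).
  have term a : f a * gibbs f a - f a * p a =
      normalizer f * (gibbs f a - p a) + eta^-1 * (pref a * (p a / gibbs f a - 1)).
    have -> : f a = normalizer f - slack f a by rewrite /slack; ring.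
    by rewrite /gibbs; field; rewrite !gt_eqF ?pref_gt0 ?slack_gt0.
  rewrite -sumrB (eq_bigr _ (fun a _ => term a)) big_split /= -mulr_sumr.
  by rewrite sumrB gibbs_sum1 p_sum1 subrr mulr0 add0r mulr_sumr.
have log_part : \sum_a pref a * ln (pref a / gibbs f a)
    - \sum_a pref a * ln (pref a / p a) = \sum_a pref a * ln (p a / gibbs f a).
  rewrite -sumrB; apply: eq_bigr => a _; rewrite -mulrBr; congr (_ * _).
  have pref_pos : pref a \in Num.pos by rewrite posrE.
  have gibbs_pos : gibbs f a \in Num.pos by rewrite posrE gibbs_gt0.
  have p_pos : p a \in Num.pos by rewrite posrE.
  have /= -> := ln_div pref_pos gibbs_pos; have /= -> := ln_div pref_pos p_pos.
  by have /= -> := ln_div p_pos gibbs_pos; ring.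
have regroup (x y u v : R) :
  x - eta^-1 * u - (y - eta^-1 * v) = x - y - eta^-1 * (u - v) by ring.
rewrite /objective regroup linear_part log_part -mulrBr -sumrB.
by under eq_bigr do rewrite -mulrBr.
Qed.

Let gap_term_ge0 f p a : 0 < p a ->
  0 <= pref a * (p a / gibbs f a - 1 - ln (p a / gibbs f a)).
Proof.
move=> pa_gt0; apply: mulr_ge0; first exact: ltW.
by have := ln_le_subr1 (divr_gt0 pa_gt0 (gibbs_gt0 f a)); lra.
Qed.

Lemma objective_le_gibbs f p : (forall a, 0 < p a) -> \sum_a p a = 1 ->
  objective f p <= objective f (gibbs f).
Proof.
move=> p_gt0 p_sum1; rewrite -subr_ge0 objective_gibbs_sub //.
apply: mulr_ge0; first by rewrite invr_ge0 ltW.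
by apply: sumr_ge0 => a _; exact: gap_term_ge0.
Qed.

Lemma objective_eq_gibbs f p : (forall a, 0 < p a) -> \sum_a p a = 1 ->
  objective f p = objective f (gibbs f) -> p = gibbs f.
Proof.
move=> p_gt0 p_sum1 eq_obj; apply/funext => a.
have /esym := objective_gibbs_sub f p_gt0 p_sum1.
rewrite eq_obj subrr => /eqP; rewrite mulf_eq0 invr_eq0 gt_eqF //= => /eqP.
move=> /(psumr_eq0P (fun b _ => gap_term_ge0 f (p_gt0 b))) /(_ a isT) /eqP.
rewrite mulf_eq0 gt_eqF //= => gap_eq0.
have ratio_eq1 : p a / gibbs f a == 1.
  apply: contraLR gap_eq0 => ratio_neq1.
  have := ln_lt_subr1 (divr_gt0 (p_gt0 a) (gibbs_gt0 f a)) ratio_neq1.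
  by move=> ln_lt; rewrite gt_eqF //; lra.
by rewrite -(divfK (lt0r_neq0 (gibbs_gt0 f a)) (p a)) (eqP ratio_eq1) mul1r.
Qed.

Lemma gibbs_is_maximizer f : is_maximizer pref eta f (gibbs f).
Proof.
split; first by split=> [a|]; [exact/ltW/gibbs_gt0 | exact: gibbs_sum1].
move=> p [_ p_sum1]; have [p_gt0|p_not_gt0] := pselect (forall a, 0 < p a).
- rewrite (J_objective f p_gt0) (J_objective f (gibbs_gt0 f)) lee_fin.
  exact: objective_le_gibbs.
- by rewrite (J_Ny f p_not_gt0) leNye.
Qed.

Lemma is_maximizer_gibbs f p : is_maximizer pref eta f p -> p = gibbs f.
Proof.
move=> [[_ p_sum1] p_max]; have := p_max _ (gibbs_is_maximizer f).1.
have [p_gt0|p_not_gt0] := pselect (forall a, 0 < p a); last first.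
  by rewrite (J_Ny f p_not_gt0) (J_objective f (gibbs_gt0 f)) leeNy_eq.
rewrite (J_objective f p_gt0) (J_objective f (gibbs_gt0 f)) lee_fin => le_obj.
by apply: objective_eq_gibbs => //; apply/le_anti; rewrite le_obj objective_le_gibbs.
Qed.

Lemma normalizer_sub f g :
  normalizer g - normalizer f =
  (\sum_a pref a * (g a - f a) / (slack f a * slack g a)) /
  \sum_a pref a / (slack f a * slack g a).
Proof.
have weight_gt0 a : 0 < pref a / (slack f a * slack g a).
  by rewrite divr_gt0 ?mulr_gt0 ?slack_gt0.
apply: (canRL (mulfK (lt0r_neq0 (sumr_gt0 weight_gt0)))).
(* Subtract the normalizations [\sum_a pref a / slack _ a = eta] of [f] and [g]. *)
apply/eqP; rewrite mulr_sumr -subr_eq0 -sumrB.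
rewrite (eq_bigr (fun a => pref a / slack f a - pref a / slack g a)).
  by rewrite sumrB !sum_pref_div_slack subrr.
move=> a _.
have := slack_gt0 f a; have := slack_gt0 g a; rewrite /slack => sg_gt0 sf_gt0.
by field; rewrite !gt_eqF.
Qed.

Lemma normalizer_lipschitz f g c : (forall a, `|g a - f a| <= c) ->
  `|normalizer g - normalizer f| <= c.
Proof.
move=> fg_le; rewrite normalizer_sub.
have w_gt0 a : 0 < pref a / (slack f a * slack g a).
  by rewrite divr_gt0 ?mulr_gt0 ?slack_gt0.
have sum_w_gt0 := sumr_gt0 w_gt0.
rewrite normrM normfV (gtr0_norm sum_w_gt0) ler_pdivrMr // mulr_sumr.
apply: (le_trans (ler_norm_sum _ _ _)); apply: ler_sum => a _.
by rewrite mulrAC normrM (gtr0_norm (w_gt0 a)) mulrC ler_pM2r.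
Qed.

Section InterpolationPath.
Variables r rhat : A -> R.

Definition reward_path (u : R) (a : A) : R := (1 - u) * r a + u * rhat a.

Local Notation dr a := (rhat a - r a).
Local Notation lam u := (normalizer (reward_path u)).
Local Notation D u := (slack (reward_path u)).

Lemma reward_path_sub u z a : reward_path z a - reward_path u a = (z - u) * dr a.
Proof. by rewrite /reward_path; ring. Qed.

Definition path_weight (u z : R) (a : A) : R := pref a / (D u a * D z a).

Lemma path_weight_gt0 u z a : 0 < path_weight u z a.
Proof. by rewrite divr_gt0 ?mulr_gt0 ?slack_gt0. Qed.

Definition normalizer_slope (u z : R) : R :=
  (\sum_a path_weight u z a * dr a) / \sum_a path_weight u z a.

Lemma normalizer_path_sub u z : lam z - lam u = normalizer_slope u z * (z - u).
Proof.
rewrite normalizer_sub /normalizer_slope mulrAC [X in _ = X / _]mulr_suml.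
rewrite (eq_bigr (fun a => path_weight u z a * dr a * (z - u))) // => a _.
by rewrite reward_path_sub /path_weight; ring.
Qed.

Lemma normalizer_path_continuous u : {for u, continuous (fun z => lam z)}.
Proof.
pose M := \sum_a `|dr a|.
have M_ge0 : 0 <= M by rewrite sumr_ge0.
have dr_le a : `|dr a| <= M by rewrite /M (bigD1 a) //= lerDl sumr_ge0.
have M1_gt0 : 0 < M + 1 by rewrite ltr_wpDl.
apply/cvgrPdist_lt => e e_gt0; exists (e / (M + 1)) => [|z /= uz_lt].
  by rewrite /= divr_gt0.
have path_le a : `|reward_path u a - reward_path z a| <= `|u - z| * M.
  by rewrite reward_path_sub normrM ler_wpM2l.
apply: le_lt_trans (normalizer_lipschitz path_le) _.
rewrite ltr_pdivlMr // in uz_lt; have := normr_ge0 (u - z); nra.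
Qed.

Lemma slack_path_continuous u a : {for u, continuous (fun z => D z a)}.
Proof.
rewrite /slack /reward_path; apply: cvgB; first exact: normalizer_path_continuous.
apply: cvgD; apply: cvgM; try exact: cvg_cst; try exact: cvg_id.
by apply: cvgB; [exact: cvg_cst | exact: cvg_id].
Qed.

Lemma path_weight_continuous u z a : {for z, continuous (fun y => path_weight u y a)}.
Proof.
apply: cvgM; first exact: cvg_cst.
apply: cvgV; first by rewrite mulf_neq0 ?lt0r_neq0 ?slack_gt0.
by apply: cvgM; [exact: cvg_cst | exact: slack_path_continuous].
Qed.

Lemma normalizer_slope_continuous u z : {for z, continuous (normalizer_slope u)}.
Proof.
apply: cvgM.
  apply: continuous_fsum => a; apply: cvgM; last exact: cvg_cst.
  exact: path_weight_continuous.
apply: cvgV; first by rewrite lt0r_neq0 // sumr_gt0 // => a; exact: path_weight_gt0.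
by apply: continuous_fsum => a; exact: path_weight_continuous.
Qed.

Lemma is_derive_normalizer_path u :
  is_derive u (1 : R) (fun z => lam z) (normalizer_slope u u).
Proof.
apply/is_derive1_caratheodory; exists (normalizer_slope u); split=> //.
- by move=> z; exact: normalizer_path_sub.
- exact: normalizer_slope_continuous.
Qed.

Lemma is_derive_slack_path u a :
  is_derive u (1 : R) (fun z => D z a) (normalizer_slope u u - dr a).
Proof.
have := is_derive_normalizer_path u => ?.
rewrite /slack /reward_path; apply: is_derive_eq.
by rewrite !real_scaleE; ring.
Qed.

Local Notation slope u := (normalizer_slope u u).

Lemma is_derive_eta_slack_path u a :
  is_derive u (1 : R) (fun z => eta * D z a) (eta * (slope u - dr a)).
Proof.
have := is_derive_slack_path u a => ?.
by apply: is_derive_eq; rewrite real_scaleE.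
Qed.

Lemma is_derive_gibbs_path u a :
  is_derive u (1 : R) (fun z => gibbs (reward_path z) a)
    (pref a * (dr a - slope u) / (eta * D u a ^+ 2)).
Proof.
have eta_slack_neq0 : eta * D u a != 0 by rewrite mulf_neq0 ?gt_eqF ?slack_gt0.
have := is_deriveV (f := fun z => eta * D z a) eta_slack_neq0
  (is_derive_eta_slack_path u a) => ?.
rewrite /gibbs; apply: is_derive_eq.
by rewrite !real_scaleE; field; rewrite !gt_eqF ?slack_gt0.
Qed.

Lemma is_derive_ln_slack_path u a :
  is_derive u (1 : R) (fun z => ln (eta * D z a)) ((slope u - dr a) / D u a).
Proof.
have eta_slack_gt0 : 0 < eta * D u a by rewrite mulr_gt0 ?slack_gt0.
have := is_derive1_comp (g := fun z => eta * D z a) (is_derive1_ln eta_slack_gt0)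
  (is_derive_eta_slack_path u a).
move=> /is_derive_eq; apply.
by field; rewrite !gt_eqF ?slack_gt0.
Qed.

Lemma objective_gibbs_path u :
  objective r (gibbs (reward_path u)) =
  \sum_a r a * gibbs (reward_path u) a - eta^-1 * \sum_a pref a * ln (eta * D u a).
Proof.
by rewrite /objective; under [X in _ - _ * X]eq_bigr do rewrite pref_div_gibbs.
Qed.

Definition path_variance (u : R) : R :=
  \sum_a path_weight u u a * dr a ^+ 2
  - (\sum_a path_weight u u a * dr a) ^+ 2 / \sum_a path_weight u u a.

Lemma is_derive_objective_path u :
  is_derive u (1 : R) (fun z => objective r (gibbs (reward_path z)))
    (- u / eta * path_variance u).
Proof.
have d_linear : is_derive u (1 : R) (fun z => \sum_a r a * gibbs (reward_path z) a)
    (\sum_a r a * (pref a * (dr a - slope u) / (eta * D u a ^+ 2))).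
  apply: is_derive_fsum => a; have := is_derive_gibbs_path u a => ?.
  by apply: is_derive_eq; rewrite real_scaleE.
have d_log : is_derive u (1 : R) (fun z => \sum_a pref a * ln (eta * D z a))
    (\sum_a pref a * ((slope u - dr a) / D u a)).
  apply: is_derive_fsum => a; have := is_derive_ln_slack_path u a => ?.
  by apply: is_derive_eq; rewrite real_scaleE.
under eq_fun do rewrite objective_gibbs_path.
apply: is_derive_eq; rewrite real_scaleE mulr_sumr -sumrB.
pose w := path_weight u u.
rewrite (eq_bigr (fun a => eta^-1 * (lam u * (w a * dr a) + - (lam u * slope u) * w a
    + - u * (w a * dr a ^+ 2) + u * slope u * (w a * dr a)))); last first.
  move=> a _; rewrite /w /path_weight.
  have D_gt0 := slack_gt0 (reward_path u) a.
  have D_eq : D u a = lam u - r a - u * dr a by rewrite /slack /reward_path; ring.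
  by rewrite D_eq in D_gt0 *; field; rewrite !gt_eqF.
rewrite -mulr_sumr !big_split /= -!mulr_sumr /path_variance /normalizer_slope -/w.
have := sumr_gt0 (path_weight_gt0 u u); rewrite -/w.
by move: (\sum_a w a) => W W_gt0; field; rewrite !gt_eqF.
Qed.

Lemma objective_path_mean_value : exists2 c, 0 < c < 1 &
  objective r (gibbs (reward_path 0)) - objective r (gibbs (reward_path 1)) =
  path_variance c / (2 * eta).
Proof.
pose phi z := objective r (gibbs (reward_path z)).
pose gap := phi 0 - phi 1.
pose H z := phi 0 - phi z - gap * z ^+ 2.
have dH z : is_derive z (1 : R) H (z / eta * path_variance z - gap * (2 * z)).
  have := is_derive_objective_path z => ?.
  by apply: is_derive_eq; rewrite !real_scaleE; ring.
have H_derivable z : derivable H z 1 by case: (dH z).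
have [c c01 dHc] : exists2 c : R, c \in `]0, 1[%R & is_derive c (1 : R) H 0.
  apply: Rolle ltr01 (fun z _ => H_derivable z) _ _.
    exact: derivable_within_continuous (fun z _ => H_derivable z).
  by rewrite /H /gap expr0n expr1n mulr0 mulr1 !subrr.
move: c01; rewrite in_itv /= => c01; exists c => //.
have c_neq0 : c != 0 by rewrite gt_eqF ?(andP c01).1.
case: (dH c) => _; case: dHc => _ -> H'c_eq0.
suff : c * 2 * (path_variance c / (2 * eta) - gap) = 0.
  by move=> /eqP; rewrite !mulf_eq0 (negbTE c_neq0) pnatr_eq0 /= subr_eq0 => /eqP ->.
by rewrite H'c_eq0; field; rewrite gt_eqF.
Qed.

Lemma path_variance_gibbs u :
  let pi := gibbs (reward_path u) in
  path_variance u = eta ^+ 2 *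
    (\sum_a pi a * (pi a / pref a * (r a - rhat a) ^+ 2)
     - (\sum_a pi a ^+ 2 / pref a * (r a - rhat a)) ^+ 2 / \sum_a pi a ^+ 2 / pref a).
Proof.
move=> pi; pose w := path_weight u u.
have pi_sq a : pi a ^+ 2 / pref a = eta^-2 * w a.
  by rewrite /pi /gibbs /w /path_weight; field; rewrite !gt_eqF ?slack_gt0.
have -> : \sum_a pi a * (pi a / pref a * (r a - rhat a) ^+ 2) =
    eta^-2 * \sum_a w a * dr a ^+ 2.
  rewrite mulr_sumr; apply: eq_bigr => a _.
  by rewrite mulrA [pi a * _]mulrA -expr2 pi_sq; ring.
have -> : \sum_a pi a ^+ 2 / pref a * (r a - rhat a) =
    - (eta^-2 * \sum_a w a * dr a).
  by rewrite mulr_sumr -sumrN; apply: eq_bigr => a _; rewrite pi_sq; ring.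
rewrite (eq_bigr _ (fun a _ => pi_sq a)) -mulr_sumr /path_variance -/w.
have := sumr_gt0 (path_weight_gt0 u u); rewrite -/w.
by move: (\sum_a w a) => W W_gt0; field; rewrite !gt_eqF.
Qed.

End InterpolationPath.

End GibbsPolicy.

Theorem lemma5p2 (R : realType) (A : finType) (r rhat pref pistar pihat : A -> R)
  (eta : R) :
  (forall a, 0 <= r a <= 1) -> (forall a, 0 <= rhat a <= 1) ->
  0 < eta -> simplex pref -> (forall a, 0 < pref a) ->
  is_maximizer pref eta r pistar ->
  is_maximizer pref eta rhat pihat ->
  exists u : R, 0 <= u <= 1 /\
  exists pu : A -> R,
    is_maximizer pref eta (fun a => (1 - u) * r a + u * rhat a) pu /\
    (J pref eta r pistar - J pref eta r pihat =
      (eta / 2 * (\sum_a pu a * (pu a / pref a * (r a - rhat a) ^+ 2)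
        - (\sum_a pu a ^+ 2 / pref a * (r a - rhat a)) ^+ 2
          / (\sum_a pu a ^+ 2 / pref a)))%:E)%E /\
    (J pref eta r pistar - J pref eta r pihat <=
      (eta / 2 * (\sum_a pu a * (pu a / pref a * (r a - rhat a) ^+ 2)))%:E)%E.
Proof.
move=> _ _ eta_gt0 [_ pref_sum1] pref_gt0 pistar_max pihat_max.
have path0 : reward_path r rhat 0 = r by apply/funext => a; rewrite /reward_path; ring.
have path1 : reward_path r rhat 1 = rhat.
  by apply/funext => a; rewrite /reward_path; ring.
rewrite -path0 in pistar_max; rewrite -path1 in pihat_max.
rewrite (is_maximizer_gibbs eta_gt0 pref_gt0 pref_sum1 pistar_max).
rewrite (is_maximizer_gibbs eta_gt0 pref_gt0 pref_sum1 pihat_max).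
have [c /andP[c_gt0 c_lt1] subopt] :=
  objective_path_mean_value eta_gt0 pref_gt0 pref_sum1 r rhat.
exists c; split; first by rewrite !ltW.
exists (gibbs eta_gt0 pref_gt0 pref_sum1 (reward_path r rhat c)).
split; first exact: gibbs_is_maximizer.
have gibbs_pos u := gibbs_gt0 eta_gt0 pref_gt0 pref_sum1 (reward_path r rhat u).
rewrite !(J_objective _ _ r (gibbs_pos _)) -EFinB subopt path_variance_gibbs /=.
have rescale (x : R) : eta ^+ 2 * x / (2 * eta) = eta / 2 * x.
  by field; rewrite gt_eqF.
rewrite rescale; split=> //.
rewrite lee_fin ler_pM2l ?divr_gt0 // gerBl divr_ge0 ?sqr_ge0 //.
by apply: sumr_ge0 => a _; rewrite divr_ge0 ?sqr_ge0 ?ltW.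
Qed.
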